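(* Let $n\ge3$. For every $\Gamma_1=([n],Q_1),\Gamma_2=([n],Q_2)\in\mathcal{S}_n$, $$d_4(\Gamma_1,\Gamma_2)=|Q_1\Delta Q_2|-\frac{2}{n+1}A(\Gamma_1\cup\Gamma_2)=|Q_1\Delta Q_2|-\frac{2}{n+1}\bigl(|Q_1\Delta Q_2|-\Lambda_{\ge2}\bigr).$$
   Context: For $n\ge1$ let $[n]=\{1,\dots,n\}$. A contact structure of length $n$ is a simple undirected graph $\Gamma=([n],Q)$ (no self-loops, no multiple edges) such that $\{i,i+1\}\notin Q$ for every $i$; its edges are called contacts, written $i\cdot j$. It is an RNA secondary structure if every node belongs to at most one contact; $\mathcal{S}_n$ is the set of these. $\Gamma_1\cup\Gamma_2=([n],Q_1\cup Q_2)$. $A(\Gamma)$ is the number of unordered pairs $\{i\cdot j,j\cdot k\}$ of distinct contacts of $\Gamma$ sharing a node ($i\neq k$). Orbits: for $\Gamma_1,\Gamma_2\in\mathcal{S}_n$ the orbits are the vertex sets of the connected components of the graph $([n],Q_1\cup Q_2)$; the length of an orbit is its number of nodes. An orbit is cyclic if either it has 2 nodes and its contact lies in $Q_1\cap Q_2$, or it has $m\ge3$ nodes that can be listed $i_1,\dots,i_m$ with $i_1\cdot i_2,\dots,i_{m-1}\cdot i_m,i_m\cdot i_1\in Q_1\cup Q_2$; otherwise it is linear. $\Lambda^{(m)}$ is the number of linear orbits of length $m$, $\Lambda_{\ge k}=\sum_{m\ge k}\Lambda^{(m)}$. $\mathbb{F}_2=\mathbb{Z}/2\mathbb{Z}$;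 the edge ideal $I_\Gamma$ is the ideal of $\mathbb{F}_2[x_1,\dots,x_n]$ generated by $\{x_ix_j:i\cdot j\in Q\}$. For $m\ge3$, $R_{n,m}=\mathbb{F}_2[x_1,\dots,x_n]/\langle\text{all monomials of total degree }m\rangle$, $\pi_m$ the quotient map, $d'_m(\Gamma_1,\Gamma_2)=\log_2\bigl|(\pi_m(I_{\Gamma_1})+\pi_m(I_{\Gamma_2}))/(\pi_m(I_{\Gamma_1})\cap\pi_m(I_{\Gamma_2}))\bigr|$ (cardinality of a quotient of additive groups), and $d_m=d'_m/\binom{n+m-3}{n}$; $d_4=d'_4/(n+1)$. $\Delta$ denotes symmetric difference. *)

From HB Require Import structures.
From mathcomp Require Import all_boot all_algebra.
From mathcomp Require Import mpoly.
From Stdlib Require Import ClassicalEpsilon.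

Set Implicit Arguments.
Unset Strict Implicit.
Unset Printing Implicit Defensive.
Import GRing.Theory.
Local Open Scope ring_scope.

Definition pb (P : Prop) : bool :=
  if excluded_middle_informative P then true else false.

(* R_{n,m} = F_2[x]/<monomials of degree m>, represented on its standard
   F_2-basis: the monomials of total degree < m (coefficient functions). *)
Notation Rq n m := {ffun 'X_{1..n < m} -> 'F_2}.

Section Defs.
Variable n : nat.
(* Node k : 'I_n stands for the node k+1 of [n]. A contact structure is given
   by its set Q of contacts, each contact being a 2-element set of nodes. *)

Definition contact_structure (Q : {set {set 'I_n}}) : Prop :=
  (forall e, e \in Q -> #|e| = 2%N) /\
  (forall i j : 'I_n, nat_of_ord j = (nat_of_ord i).+1 -> [set i; j] \notin Q).

Definition secondary_structure (Q : {set {set 'I_n}}) : Prop :=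
  contact_structure Q /\ forall x : 'I_n, (#|[set e in Q | x \in e]| <= 1)%N.

Definition symdiff_card (Q1 Q2 : {set {set 'I_n}}) : nat :=
  #|(Q1 :\: Q2) :|: (Q2 :\: Q1)|.

Definition Acount (Q : {set {set 'I_n}}) : nat :=
  #|[set P in powerset Q | (#|P| == 2%N) && (\bigcap_(e in P) e != set0)]|.

Definition adj (Q : {set {set 'I_n}}) : rel 'I_n := fun x y => [set x; y] \in Q.

Definition orbit_of (Q : {set {set 'I_n}}) (x : 'I_n) : {set 'I_n} :=
  [set y | connect (adj Q) x y].
Definition orbits (Q1 Q2 : {set {set 'I_n}}) : {set {set 'I_n}} :=
  [set orbit_of (Q1 :|: Q2) x | x : 'I_n].

Definition cyclic_orbit (Q1 Q2 : {set {set 'I_n}}) (O : {set 'I_n}) : bool :=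
  ((#|O| == 2%N) && (O \in Q1 :&: Q2)) ||
  ((2 < #|O|)%N &&
   [exists t : (#|O|).-tuple 'I_n,
      [&& uniq t, [set x in t] == O & cycle (adj (Q1 :|: Q2)) t]]).

Definition Lambda_ge (Q1 Q2 : {set {set 'I_n}}) (k : nat) : nat :=
  #|[set O in orbits Q1 Q2 | (k <= #|O|)%N && ~~ cyclic_orbit Q1 Q2 O]|.

Definition Pol := {mpoly 'F_2[n]}.

Definition in_edge_ideal (Q : {set {set 'I_n}}) (p : Pol) : Prop :=
  exists f : 'I_n -> 'I_n -> Pol,
    p = \sum_(i : 'I_n) \sum_(j : 'I_n | [set i; j] \in Q) f i j * ('X_i * 'X_j).


Definition pim (m : nat) (p : Pol) : Rq n m := [ffun mo => p@_(bmnm mo)].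

Definition pimI (m : nat) (Q : {set {set 'I_n}}) : {set Rq n m} :=
  [set r | pb (exists p, in_edge_ideal Q p /\ pim m p = r)].

Definition sumset (m : nat) (A B : {set Rq n m}) : {set Rq n m} :=
  imset2 (fun a b : Rq n m => a + b) (mem A) (fun _ => mem B).

(* d'_m = log2 |(A + B)/(A cap B)|; the order of the quotient group is
   |A + B| / |A cap B| (Lagrange), a power of 2, so trunc_log 2 is exact *)
Definition dprime (m : nat) (Q1 Q2 : {set {set 'I_n}}) : nat :=
  trunc_log 2 (#|sumset (pimI m Q1) (pimI m Q2)| %/ #|pimI m Q1 :&: pimI m Q2|).

Definition dm (m : nat) (Q1 Q2 : {set {set 'I_n}}) : rat :=
  (dprime m Q1 Q2)%:R / ('C(n + m - 3, n))%:R.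

End Defs.

From HB Require Import structures.
From mathcomp Require Import all_boot all_algebra.
From mathcomp Require Import mpoly.
From Stdlib Require Import ClassicalEpsilon Lia.
From mathcomp Require Import zify ring.
Set Implicit Arguments.
Unset Strict Implicit.
Unset Printing Implicit Defensive.
Import GRing.Theory Num.Theory.
Local Open Scope ring_scope.

(* Reduction modulo the monomials of degree [m] acts coordinatewise on the
   monomial basis, so [pi_m(I_Gamma)] is the F_2-span of the monomials of degree
   [< m] divisible by a contact monomial [x_i x_j], and
   [d'_m = |S_1 :|: S_2| - |S_1 :&: S_2|] for these monomial sets [S_k].
   For [m = 4] and secondary structures, a monomial of degree [<= 3] is divisible
   by at most one contact of each structure: [|S_k| = (n+1) |Q_k|], and [S_1 :&: S_2]
   consists of the [n+1] multiples of each common contact together with one cubic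
   monomial per pair of crossing contacts sharing a node.  This yields
   [d'_4 = (n+1) |Q_1 Delta Q_2| - 2 A].
   Finally, counting incidences between nodes and contacts in the union graph,
   whose degrees are at most two, gives [2 |Q_1 Delta Q_2| = 2 A + #(degree-one nodes)],
   and the degree-one nodes are exactly the two ends of each linear orbit of
   length [>= 2]; walking along an orbit by alternately following the contacts
   of [Q_1] and [Q_2] shows this. *)

Lemma pbP (P : Prop) : reflect P (pb P).
Proof. by rewrite /pb; case: excluded_middle_informative => h; [left | right]. Qed.

Lemma card_indexed_partition (T I : finType) (S : {set T}) (J : {set I}) (F : I -> {set T}) :
  (forall x, x \in S -> exists2 i, i \in J & x \in F i) ->
  (forall i, i \in J -> F i \subset S) ->
  (forall i j x, i \in J -> j \in J -> x \in F i -> x \in F j -> i = j) ->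
  #|S| = (\sum_(i in J) #|F i|)%N.
Proof.
move=> Hcover Hsub Hdisj; under eq_bigr do rewrite -sum1_card big_mkcond /=.
rewrite exchange_big /= -sum1_card big_mkcond /=; apply: eq_bigr => x _.
case: ifP => Hx.
  have [i Hi Hxi] := Hcover x Hx; rewrite (bigD1 i) //= Hxi big1 // => j /andP [Hj Hji].
  by case Hxj: (x \in F j) => //; rewrite (Hdisj _ _ _ Hj Hi Hxj Hxi) eqxx in Hji.
rewrite big1 // => i Hi; case Hxi: (x \in F i) => //.
by have := subsetP (Hsub i Hi) x Hxi; rewrite Hx.
Qed.

Lemma sum_nat_bool_card (I : finType) (C P : pred I) :
  (\sum_(i | C i) (P i : nat))%N = #|[set i | C i && P i]|.
Proof.
rewrite -sum1_card [RHS]big_mkcond [LHS]big_mkcond /=; apply: eq_bigr => i _.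
by rewrite inE; case: (C i); case: (P i).
Qed.

(** * The truncated edge ideals *)

Section EdgeIdealTruncation.
Variables n m : nat.
Local Notation Mon := 'X_{1..n < m}.
Implicit Types (Q : {set {set 'I_n}}) (S : {set Mon}).

Definition divisible_by_contact Q (mo : 'X_{1..n}) : bool :=
  [exists e in Q, [forall i in e, (0 < mo i)%N]].

Definition contact_monomials Q : {set Mon} := [set mo : Mon | divisible_by_contact Q mo].

Definition supported_on S : {set Rq n m} :=
  [set r : Rq n m | [forall mo, (mo \notin S) ==> (r mo == 0)]].

Lemma edge_ideal_coef_eq0 Q p mo :
  in_edge_ideal Q p -> ~~ divisible_by_contact Q mo -> p@_mo = 0.
Proof.
move=> [f ->] Hmo; rewrite raddf_sum big1 // => i _.
rewrite raddf_sum big1 // => j Hij; rewrite -mpolyXD.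
apply/eqP; apply: contraNT Hmo.
rewrite -mcoeff_msupp (perm_mem (msuppMX _ _)) => /mapP [mo' _ ->].
apply/existsP; exists [set i; j]; rewrite Hij /=.
by apply/forallP => k; apply/implyP; rewrite !inE => /orP [] /eqP ->;
  rewrite !mnmDE !mnm1E eqxx /=; lia.
Qed.

Lemma edge_ideal0 Q : in_edge_ideal Q 0.
Proof.
by exists (fun _ _ => 0); rewrite big1 // => i _; rewrite big1 // => j _; rewrite mul0r.
Qed.

Lemma edge_idealD Q p q : in_edge_ideal Q p -> in_edge_ideal Q q -> in_edge_ideal Q (p + q).
Proof.
move=> [f ->] [g ->]; exists (fun a b => f a b + g a b).
rewrite -big_split; apply: eq_bigr => i _; rewrite -big_split.
by apply: eq_bigr => j _; rewrite mulrDl.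
Qed.

Lemma edge_ideal_sum Q (I : finType) (F : I -> Pol n) :
  (forall i, in_edge_ideal Q (F i)) -> in_edge_ideal Q (\sum_i F i).
Proof. by move=> HF; apply: big_ind => //; [exact: edge_ideal0 | exact: edge_idealD]. Qed.

Lemma edge_ideal_gen Q (i j : 'I_n) q :
  [set i; j] \in Q -> in_edge_ideal Q (q * ('X_i * 'X_j)).
Proof.
move=> Hij; exists (fun a b => if (a == i) && (b == j) then q else 0).
rewrite (bigD1 i) //= [X in _ = _ + X]big1 ?addr0; last first.
  move=> a Ha; rewrite big1 // => b _.
  by case: ifP => [/andP [/eqP Ea _] | _]; [rewrite Ea eqxx in Ha | rewrite mul0r].
rewrite (bigD1 j) //= !eqxx [X in _ = _ + X]big1 ?addr0 // => b /andP [_ Hb].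
by case: ifP => [/andP [_ /eqP Eb] | _]; [rewrite Eb eqxx in Hb | rewrite mul0r].
Qed.

Lemma contact_monomial_in_edge_ideal Q q (mo : 'X_{1..n}) :
  (forall e, e \in Q -> #|e| = 2%N) -> divisible_by_contact Q mo ->
  in_edge_ideal Q (q * 'X_[mo]).
Proof.
move=> Hcard /existsP [e /andP [He /forallP Hpos]].
have /cards2P [i [j [Hij De]]] : #|e| == 2%N by rewrite Hcard.
have Hle : (U_(i) + U_(j) <= mo)%MM.
  apply/mnm_lepP => k; rewrite mnmDE !mnm1E.
  have := Hpos i; have := Hpos j; rewrite De !inE !eqxx orbT /= => Hj Hi.
  case: (eqVneq i k) => [Eik | _]; case: (eqVneq j k) => [Ejk | _] /=.
  - by rewrite Eik Ejk eqxx in Hij.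
  - by rewrite addn0 -Eik.
  - by rewrite -Ejk.
  - by [].
by rewrite -(submK Hle) !mpolyXD mulrA; apply: edge_ideal_gen; rewrite -De.
Qed.

Lemma pimI_supported Q :
  (forall e, e \in Q -> #|e| = 2%N) -> pimI m Q = supported_on (contact_monomials Q).
Proof.
move=> Hcard; apply/setP => r; rewrite !inE; apply/pbP/forallP.
  move=> [p [Hp <-]] mo; apply/implyP; rewrite inE ffunE => Hmo.
  by rewrite (edge_ideal_coef_eq0 Hp Hmo).
move=> Hr; exists (\sum_(mo : Mon) r mo *: 'X_[bmnm mo]); split.
  apply: edge_ideal_sum => mo; have [-> | Hnz] := eqVneq (r mo) 0.
    by rewrite scale0r; exact: edge_ideal0.
  have := Hr mo; rewrite (negbTE Hnz) implybF negbK inE => Hdiv.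
  by rewrite -mul_mpolyC; exact: contact_monomial_in_edge_ideal.
apply/ffunP => mo; rewrite ffunE raddf_sum (bigD1 mo) //= mcoeffZ mcoeffX eqxx mulr1.
rewrite big1 ?addr0 // => mo' Hne; rewrite mcoeffZ mcoeffX.
suff /negbTE -> : bmnm mo' != bmnm mo by rewrite mulr0.
by apply: contra Hne => /eqP H; apply/eqP/val_inj.
Qed.

Lemma card_supported S : #|supported_on S| = (2 ^ #|S|)%N.
Proof.
have -> : #|supported_on S| = #|pffun_on (0 : 'F_2) S predT|.
  apply: eq_card => r; rewrite inE; apply/forallP/pffun_onP.
    move=> H; split=> [|//]; apply/supportP => x Hx; apply/eqP.
    by have := H x; rewrite Hx.
  by move=> [/supportP H _] x; apply/implyP => /H ->.
by rewrite card_pffun_on cardT -cardT card_Fp.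
Qed.

Lemma sumset_supported S1 S2 :
  sumset (supported_on S1) (supported_on S2) = supported_on (S1 :|: S2).
Proof.
apply/setP => r; apply/imset2P/idP.
  move=> [a b]; rewrite !inE => /forallP Ha /forallP Hb ->.
  apply/forallP => mo; rewrite !inE negb_or; apply/implyP => /andP [H1 H2].
  have := Ha mo; have := Hb mo; rewrite H1 H2 /= => /eqP h1 /eqP h2.
  by rewrite ffunE h1 h2 addr0.
rewrite inE => /forallP Hr; set a := [ffun mo => if mo \in S1 then r mo else 0].
exists a (r - a); last by rewrite addrC subrK.
  by rewrite inE; apply/forallP => mo; apply/implyP => H; rewrite ffunE (negbTE H).
rewrite inE; apply/forallP => mo; apply/implyP => H; rewrite !ffunE.
case: ifP => H1; first by rewrite subrr.
by have := Hr mo; rewrite inE H1 (negbTE H) => /eqP ->; rewrite subr0.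
Qed.

Lemma setI_supported S1 S2 : supported_on S1 :&: supported_on S2 = supported_on (S1 :&: S2).
Proof.
apply/setP => r; rewrite !inE; apply/andP/forallP.
  move=> [/forallP H1 /forallP H2] mo; rewrite inE negb_and.
  by apply/implyP => /orP [] H; [have := H1 mo | have := H2 mo]; rewrite H.
by move=> H; split; apply/forallP => mo; apply/implyP => Hm; have := H mo;
  rewrite inE (negbTE Hm) ?andbF.
Qed.

Lemma dprime_contact_monomials Q1 Q2 :
  (forall e, e \in Q1 -> #|e| = 2%N) -> (forall e, e \in Q2 -> #|e| = 2%N) ->
  dprime m Q1 Q2 =
    (#|contact_monomials Q1 :|: contact_monomials Q2|
     - #|contact_monomials Q1 :&: contact_monomials Q2|)%N.
Proof.
move=> H1 H2; rewrite /dprime !pimI_supported // sumset_supported setI_supported.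
have sIU : contact_monomials Q1 :&: contact_monomials Q2
    \subset contact_monomials Q1 :|: contact_monomials Q2.
  exact: subset_trans (subsetIl _ _) (subsetUl _ _).
rewrite !card_supported -{1}(subnK (subset_leq_card sIU)) expnD.
by rewrite mulnK ?expn_gt0 // trunc_expnK.
Qed.

End EdgeIdealTruncation.

Section SquarefreeMultiples.
Variables n m : nat.
Local Notation Mon := 'X_{1..n < m}.
Implicit Types T : {set 'I_n}.

Definition indicator_mnm T : 'X_{1..n} := [multinom ((i \in T) : nat) | i < n].

Definition multiples_of T : {set Mon} := [set mo : Mon | [forall i in T, (0 < mo i)%N]].

Lemma mdeg_indicator T : mdeg (indicator_mnm T) = #|T|.
Proof.
rewrite mdegE; under eq_bigr do rewrite mnmE.
by rewrite -sum1_card [in RHS]big_mkcond.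
Qed.

Lemma multiples_ofP T (mo : Mon) : reflect (indicator_mnm T <= mo)%MM (mo \in multiples_of T).
Proof.
rewrite inE; apply: (iffP forallP) => [H | /mnm_lepP H i].
  by apply/mnm_lepP => i; rewrite mnmE; case Hi: (i \in T) => //; have := H i; rewrite Hi.
by apply/implyP => Hi; have := H i; rewrite mnmE Hi.
Qed.

Lemma multiples_ofI T1 T2 : multiples_of T1 :&: multiples_of T2 = multiples_of (T1 :|: T2).
Proof.
apply/setP => mo; rewrite !inE; apply/andP/forallP.
  move=> [/forallP H1 /forallP H2] i; rewrite inE.
  by apply/implyP => /orP [] Hi; [have := H1 i | have := H2 i]; rewrite Hi.
by move=> H; split; apply/forallP => i; apply/implyP => Hi; have := H i; rewrite inE Hi ?orbT.
Qed.

Lemma mdeg_multiples_of T (mo : Mon) : mo \in multiples_of T -> (#|T| <= mdeg mo)%N.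
Proof. by move/multiples_ofP/submK <-; rewrite mdegD mdeg_indicator leq_addl. Qed.

(* Dividing by the squarefree monomial [x_T] is a bijection onto the monomials
   of degree [< m - |T|]. *)
Lemma card_multiples_of T : #|multiples_of T| = #|[set mo : Mon | (mdeg mo < m - #|T|)%N]|.
Proof.
pose shift (mo : Mon) : Mon := insubd mo (bmnm mo + indicator_mnm T)%MM.
have shiftE (mo : Mon) : (mdeg mo < m - #|T|)%N -> bmnm (shift mo) = (mo + indicator_mnm T)%MM.
  by move=> H; rewrite /shift val_insubd mdegD mdeg_indicator; case: ifP => //; lia.
rewrite -(@card_in_imset _ _ shift); last first.
  move=> a b; rewrite !inE => Ha Hb /(congr1 (@bmnm _ _)); rewrite !shiftE // => /addIm E.
  exact: val_inj.
apply: eq_card => mo; apply/idP/imsetP => [Hmo | [a]]; last first.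
  by rewrite inE => Ha ->; apply/multiples_ofP; rewrite shiftE // lem_addl.
have Hle := multiples_ofP _ _ Hmo.
have Hdeg : (mdeg (mo - indicator_mnm T)%MM < m - #|T|)%N.
  by have := bmdeg mo; rewrite -{1}(submK Hle) mdegD mdeg_indicator; lia.
have Hdeg' : (mdeg (mo - indicator_mnm T)%MM < m)%N by lia.
exists (BMultinom Hdeg'); first by rewrite inE.
by apply/val_inj; rewrite /= shiftE //= submK.
Qed.

End SquarefreeMultiples.

Section DegreeFourCounts.
Variable n : nat.
Local Notation Mon := 'X_{1..n < 4}.
Implicit Types T : {set 'I_n}.

Lemma card_mdeg0 : #|[set mo : Mon | mdeg mo == 0%N]| = 1%N.
Proof.
have mdeg00 : (mdeg (0%MM : 'X_{1..n}) < 4)%N by rewrite mdeg0.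
transitivity #|[set BMultinom mdeg00]|; last exact: cards1.
apply: eq_card => mo; rewrite !inE mdeg_eq0.
by apply/eqP/eqP => [H | ->] //; apply: val_inj.
Qed.

Lemma card_mdeg1 : #|[set mo : Mon | mdeg mo == 1%N]| = n.
Proof.
have mdegU (i : 'I_n) : (mdeg U_(i) < 4)%N by rewrite mdeg1.
pose U (i : 'I_n) : Mon := BMultinom (mdegU i).
rewrite -[RHS](card_ord n) -cardsT -(@card_imset _ _ U); last first.
  by move=> i j /(congr1 (@bmnm _ _)) /eqP; rewrite eq_mnm1 => /eqP.
apply: eq_card => mo; rewrite inE; apply/mdeg1P/imsetP.
  by move=> [i /eqP Hi]; exists i => //; apply: val_inj.
by move=> [i _ ->]; exists i.
Qed.

Lemma card_mdeg_lt2 : #|[set mo : Mon | (mdeg mo < 2)%N]| = n.+1.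
Proof.
have -> : [set mo : Mon | (mdeg mo < 2)%N] =
    [set mo : Mon | mdeg mo == 0%N] :|: [set mo : Mon | mdeg mo == 1%N].
  by apply/setP => mo; rewrite !inE; case: (mdeg _) => [|[|]].
rewrite cardsU card_mdeg0 card_mdeg1 -[RHS]subn0; congr (_ - _)%N.
by apply/eqP; rewrite cards_eq0; apply/eqP/setP => mo; rewrite !inE; case: (mdeg _) => [|[|]].
Qed.

Lemma card_multiples_of_pair T : #|T| = 2%N -> #|multiples_of 4 T| = n.+1.
Proof. by move=> HT; rewrite card_multiples_of HT card_mdeg_lt2. Qed.

Lemma card_multiples_of_triple T : #|T| = 3%N -> #|multiples_of 4 T| = 1%N.
Proof.
move=> HT; rewrite card_multiples_of HT -[RHS]card_mdeg0.
by apply: eq_card => mo; rewrite !inE; case: (mdeg _).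
Qed.

Lemma card_multiples_of_large T : (4 <= #|T|)%N -> #|multiples_of 4 T| = 0%N.
Proof.
move=> HT; rewrite card_multiples_of; apply/eqP; rewrite cards_eq0.
by apply/eqP/setP => mo; rewrite !inE; lia.
Qed.

End DegreeFourCounts.

(** * Secondary structures *)

Section SecondaryStructure.
Variables (n : nat) (Q : {set {set 'I_n}}).
Hypothesis HQ : secondary_structure Q.

Lemma contact_card e : e \in Q -> #|e| = 2%N.
Proof. by case: HQ => [[H _] _] /H. Qed.

Lemma contacts_disjoint e f : e \in Q -> f \in Q -> e != f -> e :&: f = set0.
Proof.
case: HQ => _ Hnode He Hf Hne; apply/setP => x; rewrite inE in_set0.
apply/negP => /andP [xe xf]; have := Hnode x.
have : [set e; f] \subset [set g in Q | x \in g].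
  by apply/subsetP => g; rewrite !inE => /orP [] /eqP ->; rewrite ?He ?Hf.
by move/subset_leq_card; rewrite cards2 Hne => /leq_trans H /H.
Qed.

Lemma contact_disjoint_at e f x : e \in Q -> f \in Q -> x \in e -> x \in f -> e = f.
Proof.
move=> He Hf Hxe Hxf; apply/eqP/negPn/negP => Hne.
by have /setP/(_ x) := contacts_disjoint He Hf Hne; rewrite !inE Hxe Hxf.
Qed.

Lemma contact_neq x y : [set x; y] \in Q -> x != y.
Proof. by move/contact_card; rewrite cards2; case: eqVneq. Qed.

Definition partner (x : 'I_n) : 'I_n := odflt x [pick y | [set x; y] \in Q].

Lemma partner_contact x y : [set x; y] \in Q -> partner x = y.
Proof.
move=> Hxy; rewrite /partner; case: pickP => [z Hz | /(_ y)]; last by rewrite Hxy.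
have /setP/(_ z) := contact_disjoint_at Hz Hxy (set21 _ _) (set21 _ _).
by rewrite !inE eqxx orbT eq_sym (negbTE (contact_neq Hz)) => /esym /eqP.
Qed.

Lemma contact_partner x : partner x != x -> [set x; partner x] \in Q.
Proof. by rewrite /partner; case: pickP => [z Hz | _] //=; rewrite eqxx. Qed.

Lemma partnerK : involutive partner.
Proof.
move=> x; have [E | Hne] := eqVneq (partner x) x; first by rewrite !E.
by apply: partner_contact; rewrite setUC; apply: contact_partner.
Qed.

Lemma contactE x y : ([set x; y] \in Q) = (partner x == y) && (x != y).
Proof.
apply/idP/andP => [H | [/eqP <- Hne]].
  by rewrite (partner_contact H) (contact_neq H).
by apply: contact_partner; rewrite eq_sym.
Qed.

Lemma contact_at e x : e \in Q -> x \in e -> e = [set x; partner x] /\ partner x != x.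
Proof.
move=> He Hx; have /cards2P [a [b [Hab Eab]]] : #|e| == 2%N by rewrite contact_card.
subst e; move: Hx; rewrite !inE => /orP [] /eqP ->.
  by rewrite (partner_contact He) eq_sym.
by rewrite setUC in He; rewrite (partner_contact He) setUC.
Qed.

Lemma card_paired : #|[set x | partner x != x]| = (2 * #|Q|)%N.
Proof.
rewrite (@card_indexed_partition _ _ _ Q id).
- by rewrite (eq_bigr (fun _ => 2%N)) ?sum_nat_const 1?mulnC // => e /contact_card.
- by move=> x; rewrite inE => Hx; exists [set x; partner x]; rewrite ?contact_partner ?set21.
- by move=> e He; apply/subsetP => x Hx; rewrite inE (contact_at He Hx).2.
- by move=> e f x He Hf; apply: contact_disjoint_at.
Qed.

Lemma multiples_of_contact_inj e f (mo : 'X_{1..n < 4}) : e \in Q -> f \in Q ->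
  mo \in multiples_of 4 e -> mo \in multiples_of 4 f -> e = f.
Proof.
move=> He Hf Hme Hmf; apply/eqP/negPn/negP => Hne.
have : mo \in multiples_of 4 (e :|: f) by rewrite -multiples_ofI inE Hme Hmf.
move/mdeg_multiples_of; rewrite cardsU contacts_disjoint // cards0 subn0.
by rewrite !contact_card //; have := bmdeg mo; lia.
Qed.

Lemma card_contact_monomials : #|contact_monomials 4 Q| = (#|Q| * n.+1)%N.
Proof.
rewrite (@card_indexed_partition _ _ _ Q (multiples_of 4)).
- rewrite (eq_bigr (fun _ => n.+1)) ?sum_nat_const // => e He.
  exact/card_multiples_of_pair/contact_card.
- by move=> mo; rewrite inE => /existsP [e /andP [He H]]; exists e; rewrite ?inE.
- by move=> e He; apply/subsetP => mo; rewrite !inE => H; apply/existsP; exists e; rewrite He.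
- by move=> e f mo; apply: multiples_of_contact_inj.
Qed.

End SecondaryStructure.

Lemma symdiff_cardE (n : nat) (Q1 Q2 : {set {set 'I_n}}) :
  symdiff_card Q1 Q2 = (#|Q1| + #|Q2| - 2 * #|Q1 :&: Q2|)%N.
Proof.
rewrite /symdiff_card cardsU !cardsD.
have -> : (Q1 :\: Q2) :&: (Q2 :\: Q1) = set0.
  by apply/setP => x; rewrite !inE; case: (x \in Q1); case: (x \in Q2).
have := subset_leq_card (subsetIl Q1 Q2); have := subset_leq_card (subsetIr Q1 Q2).
by rewrite cards0 [Q2 :&: Q1]setIC; lia.
Qed.

Lemma card_setI_set2_le1 (T : finType) (e f : {set T}) :
  #|e| = 2%N -> #|f| = 2%N -> e != f -> (#|e :&: f| <= 1)%N.
Proof.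
move=> He Hf; apply: contraR; rewrite -ltnNge => H.
have /eqP E1 : e :&: f == e by rewrite eqEcard subsetIl He.
have /eqP E2 : e :&: f == f by rewrite eqEcard subsetIr Hf.
by rewrite -E1 E2.
Qed.

Section TwoSecondaryStructures.
Variables (n : nat) (Q1 Q2 : {set {set 'I_n}}).
Hypotheses (H1 : secondary_structure Q1) (H2 : secondary_structure Q2).

(* Two contacts of [Q1 :|: Q2] that share a node cannot lie in the same
   structure, so the pairs counted by [Acount] are the ordered pairs below. *)
Definition crossing_pairs : {set {set 'I_n} * {set 'I_n}} :=
  [set p in setX Q1 Q2 | (p.1 != p.2) && (p.1 :&: p.2 != set0)].

Lemma card_setI_contact_monomials :
  #|contact_monomials 4 Q1 :&: contact_monomials 4 Q2| =
    (#|Q1 :&: Q2| * n.+1 + #|crossing_pairs|)%N.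
Proof.
rewrite (@card_indexed_partition _ _ _ (setX Q1 Q2) (fun p => multiples_of 4 (p.1 :|: p.2))).
- rewrite (eq_bigr (fun p => (p.1 == p.2) * n.+1 +
       ((p.1 != p.2) && (p.1 :&: p.2 != set0)))%N); last first.
    move=> [e f] /setXP [He Hf] /=.
    have ce := contact_card H1 He; have cf := contact_card H2 Hf.
    case: eqVneq => [<- | Hne] /=; first by rewrite setUid card_multiples_of_pair // mul1n addn0.
    have := card_setI_set2_le1 ce cf Hne; rewrite -cards_eq0.
    case Hc: #|e :&: f| => [|[|//]] _ /=.
      by rewrite card_multiples_of_large // cardsU ce cf Hc.
    by rewrite card_multiples_of_triple // cardsU ce cf Hc.
  rewrite big_split /= -big_distrl /= !sum_nat_bool_card; congr (_ * _ + _)%N.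
  rewrite -(@card_in_imset _ _ (fun e => (e, e)) (Q1 :&: Q2)); last by move=> a b _ _ [].
  apply: eq_card => [[e f]]; rewrite !inE /=; apply/andP/imsetP => /=.
    by move=> [/andP [He Hf] /eqP Ef]; subst f; exists e; rewrite // inE He Hf.
  by move=> [g]; rewrite inE => /andP [He Hf] [-> ->]; rewrite He Hf.
- move=> mo; rewrite !inE => /andP [/existsP [e /andP [He Hme]] /existsP [f /andP [Hf Hmf]]].
  by exists (e, f); [rewrite inE He Hf | rewrite /= -multiples_ofI !inE Hme Hmf].
- move=> [e f] /setXP [He Hf] /=; apply/subsetP => mo.
  rewrite -multiples_ofI !inE => /andP [Hme Hmf].
  by apply/andP; split; apply/existsP; [exists e; rewrite He | exists f; rewrite Hf].
- move=> [e f] [e' f'] mo /setXP [He Hf] /setXP [He' Hf'] /=.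
  rewrite -!multiples_ofI => /setIP [Ha Hb] /setIP [Hc Hd].
  by rewrite (multiples_of_contact_inj H1 He He' Ha Hc) (multiples_of_contact_inj H2 Hf Hf' Hb Hd).
Qed.

Lemma Acount_crossing_pairs : Acount (Q1 :|: Q2) = #|crossing_pairs|.
Proof.
rewrite /Acount -(@card_in_imset _ _ (fun p => [set p.1; p.2]) crossing_pairs).
  apply: eq_card => P; rewrite !inE; apply/idP/imsetP.
    move=> /andP [HP /andP [/cards2P [a [b [Hab EP]]] Hcap]]; subst P.
    rewrite bigcap_setU !big_set1 in Hcap.
    have := subsetP HP a (set21 _ _); have := subsetP HP b (set22 _ _); rewrite !inE.
    case Ha1: (a \in Q1); case Hb1: (b \in Q1) => /= Hb Ha.
    - by rewrite (contacts_disjoint H1 Ha1 Hb1 Hab) eqxx in Hcap.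
    - by exists (a, b); rewrite // !inE Ha1 Hb Hab Hcap.
    - by exists (b, a); rewrite /= 1?setUC // !inE Hb1 Ha eq_sym Hab setIC Hcap.
    - by rewrite (contacts_disjoint H2 Ha Hb Hab) eqxx in Hcap.
  move=> [[e f]]; rewrite !inE /= => /andP [/andP [He Hf] /andP [Hne Hcap]] ->.
  rewrite bigcap_setU !big_set1 Hcap cards2 Hne !andbT; apply/subsetP => g.
  by rewrite !inE => /orP [] /eqP ->; rewrite ?He ?Hf ?orbT.
move=> [e f] [e' f']; rewrite !inE /= => /andP [/andP [He Hf] /andP [Hne Hcap]].
move=> /andP [/andP [He' Hf'] /andP [Hne' Hcap']] E.
have : e \in [set e'; f'] by rewrite -E set21.
rewrite !inE => /orP [] /eqP Ee; subst e.
  have : f \in [set e'; f'] by rewrite -E set22.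
  by rewrite !inE => /orP [] /eqP Ef; [rewrite Ef eqxx in Hne | rewrite Ef].
have : e' \in [set f'; f] by rewrite E set21.
rewrite !inE => /orP [] /eqP Ee'; first by rewrite Ee' eqxx in Hne'.
by subst e'; rewrite (contacts_disjoint H2 Hf Hf' Hne') eqxx in Hcap'.
Qed.

End TwoSecondaryStructures.

Section NodeCounting.
Variables (n : nat) (Q1 Q2 : {set {set 'I_n}}).
Hypotheses (H1 : secondary_structure Q1) (H2 : secondary_structure Q2).
Local Notation p1 := (partner Q1).
Local Notation p2 := (partner Q2).

(* The nodes of degree one in the graph [([n], Q1 :|: Q2)]. *)
Definition end_node (x : 'I_n) : bool := (p1 x != x) != (p2 x != x).

Lemma card_common_paired : #|[set x | (p1 x != x) && (p1 x == p2 x)]| = (2 * #|Q1 :&: Q2|)%N.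
Proof.
rewrite (@card_indexed_partition _ _ _ (Q1 :&: Q2) id).
- rewrite (eq_bigr (fun _ => 2%N)) ?sum_nat_const 1?mulnC // => e.
  by rewrite inE => /andP [/(contact_card H1)].
- move=> x; rewrite inE => /andP [Hx /eqP E]; exists [set x; p1 x]; last exact: set21.
  by rewrite inE contact_partner //= E contact_partner // -E.
- move=> e; rewrite inE => /andP [He1 He2]; apply/subsetP => x Hx; rewrite inE.
  have [E1 N1] := contact_at H1 He1 Hx; have [E2 N2] := contact_at H2 He2 Hx.
  have : p1 x \in e by rewrite E1 set22.
  by rewrite N1 E2 !inE (negbTE N1) /= => ->.
- by move=> e f x; rewrite !inE => /andP [He _] /andP [Hf _]; apply: (contact_disjoint_at H1).
Qed.

Lemma card_crossing_pairs :
  #|crossing_pairs Q1 Q2| = #|[set x | [&& p1 x != x, p2 x != x & p1 x != p2 x]]|.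
Proof.
rewrite -(@card_in_imset _ _ (fun x => ([set x; p1 x], [set x; p2 x]))).
  apply: eq_card => [[e f]]; apply/idP/imsetP.
    rewrite !inE /= => /andP [/andP [He Hf] /andP [Hne /set0Pn [x]]].
    rewrite inE => /andP [Hxe Hxf].
    have [E1 N1] := contact_at H1 He Hxe; have [E2 N2] := contact_at H2 Hf Hxf.
    exists x; last by rewrite -E1 -E2.
    by rewrite inE N1 N2; apply: contra Hne => /eqP E; rewrite E1 E2 E.
  move=> [x]; rewrite inE => /and3P [N1 N2 N12] [-> ->].
  rewrite !inE /= !contact_partner //=; apply/andP; split.
    apply/negP => /eqP E; have : p2 x \in [set x; p1 x] by rewrite E set22.
    by rewrite !inE (negbTE N2) /= eq_sym (negbTE N12).
  by apply/set0Pn; exists x; rewrite !inE eqxx.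
move=> x y; rewrite !inE => /and3P [N1 N2 N12] _ [E1 E2].
have : y \in [set x; p1 x] by rewrite E1 set21.
have : y \in [set x; p2 x] by rewrite E2 set21.
rewrite !inE => /orP [/eqP -> // | /eqP Ey2] /orP [/eqP -> // | /eqP Ey1].
by rewrite -Ey1 -Ey2 eqxx in N12.
Qed.

(* Double counting of the incidences between nodes and contacts: a node lies
   on two distinct contacts, on one common contact, or is an end node. *)
Lemma symdiff_card_end_nodes :
  (2 * symdiff_card Q1 Q2 = 2 * Acount (Q1 :|: Q2) + #|[set x | end_node x]|)%N.
Proof.
have Hnode x : ((p1 x != x) + (p2 x != x) =
    2 * [&& p1 x != x, p2 x != x & p1 x != p2 x]
    + 2 * ((p1 x != x) && (p1 x == p2 x)) + end_node x)%N.
  rewrite /end_node; move: (p1 x) (p2 x) => a b.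
  case Ea: (a == x); case Eb: (b == x); case Eab: (a == b) => //=.
  by move: Ea; rewrite (eqP Eab) Eb.
have : (\sum_x ((p1 x != x) + (p2 x != x)) =
    \sum_x (2 * [&& p1 x != x, p2 x != x & p1 x != p2 x]
      + 2 * ((p1 x != x) && (p1 x == p2 x)) + end_node x))%N.
  by apply: eq_bigr => x _; exact: Hnode.
rewrite !big_split /= !big1_eq !addn0.
rewrite !sum_nat_bool_card /= -card_crossing_pairs card_common_paired !card_paired //.
rewrite Acount_crossing_pairs // symdiff_cardE.
have := subset_leq_card (subsetIl Q1 Q2); have := subset_leq_card (subsetIr Q1 Q2).
lia.
Qed.

End NodeCounting.

(** * Orbits of the union graph *)

Lemma cycle_uniq_neighbours (T : eqType) (e : rel T) (t : seq T) (y : T) :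
  uniq t -> cycle e t -> (2 < size t)%N -> y \in t ->
  exists z w, [/\ z != w, e y z & e w y].
Proof.
move=> Hu Hc Hs Hy; case: (rot_to Hy) => i s' Hr.
have : uniq (y :: s') by rewrite -Hr rot_uniq.
have : cycle e (y :: s') by rewrite -Hr rot_cycle.
have : (2 < size (y :: s'))%N by rewrite -Hr size_rot.
case: s' {Hr} => [|z [|a s3]] //= _ /andP [Hyz /andP [_]].
rewrite rcons_path => /andP [_ Hly] Hu'; exists z, (last a s3); split=> //.
apply/negP => /eqP E; move: Hu'; rewrite /= E.
by rewrite (mem_last a s3) /= andbF.
Qed.

Lemma iter_inj (T : Type) (f : T -> T) k : injective f -> injective (iter k f).
Proof. by move=> Hf; elim: k => //= k IH x y /Hf /IH. Qed.

Section UnionGraph.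
Variables (n : nat) (Q1 Q2 : {set {set 'I_n}}).
Hypotheses (H1 : secondary_structure Q1) (H2 : secondary_structure Q2).
Local Notation Q := (Q1 :|: Q2).
Local Notation A := (adj (Q1 :|: Q2)).
Local Notation end_node := (end_node Q1 Q2).

Definition partner_in (b : bool) : 'I_n -> 'I_n := if b then partner Q1 else partner Q2.

Lemma partner_inK b : involutive (partner_in b).
Proof. by case: b; apply: partnerK. Qed.

Lemma adj_unionP x y : reflect (exists b, partner_in b x = y /\ x != y) (A x y).
Proof.
rewrite /adj inE (contactE H1) (contactE H2).
apply: (iffP orP) => [[] /andP [/eqP E N] | [[] [/= E N]]].
- by exists true.
- by exists false.
- by left; rewrite E eqxx N.
- by right; rewrite E eqxx N.
Qed.

Lemma adj_partner_in b x : partner_in b x != x -> A x (partner_in b x).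
Proof. by move=> N; apply/adj_unionP; exists b; rewrite eq_sym. Qed.

Lemma adj_sym : ssrbool.symmetric A.
Proof. by move=> x y; rewrite /adj setUC. Qed.

Lemma orbit_of_eq x y : y \in orbit_of Q x -> orbit_of Q y = orbit_of Q x.
Proof.
rewrite inE => Hxy; apply/setP => z; rewrite !inE.
by rewrite (same_connect (sym_connect_sym adj_sym) Hxy).
Qed.

Lemma orbit_of_refl x : x \in orbit_of Q x.
Proof. by rewrite inE connect0. Qed.

Lemma orbit_of_min (S : {set 'I_n}) x :
  x \in S -> (forall a b, a \in S -> A a b -> b \in S) -> orbit_of Q x \subset S.
Proof.
move=> Hx HS; apply/subsetP => y; rewrite inE => /connectP [s Hp ->].
by elim: s x Hx Hp => //= a s IH x Hx /andP [Hxa Hp]; exact: IH (HS _ _ Hx Hxa) Hp.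
Qed.

Lemma partner_in_orbit b x y : y \in orbit_of Q x -> partner_in b y \in orbit_of Q x.
Proof.
move=> Hy; rewrite -(orbit_of_eq Hy) inE.
have [-> | N] := eqVneq (partner_in b y) y; first exact: connect0.
exact/connect1/adj_partner_in.
Qed.

Lemma orbit_of_unpaired y :
  partner Q1 y = y -> partner Q2 y = y -> orbit_of Q y = [set y].
Proof.
move=> E1 E2; apply/eqP; rewrite eqEsubset sub1set orbit_of_refl andbT.
apply: orbit_of_min => [|a b]; first by rewrite inE.
by rewrite inE => /eqP -> /adj_unionP [[] [/= <-]]; rewrite ?E1 ?E2 eqxx.
Qed.

Lemma orbit_of_common_contact y :
  partner Q1 y = partner Q2 y -> partner Q1 y != y -> orbit_of Q y = [set y; partner Q1 y].
Proof.
move=> E N; apply/eqP; rewrite eqEsubset; apply/andP; split.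
  apply: orbit_of_min => [|a b]; first exact: set21.
  rewrite !inE => /orP [] /eqP -> /adj_unionP [[] [/= <- _]].
  - by rewrite eqxx orbT.
  - by rewrite -E eqxx orbT.
  - by rewrite (partnerK H1) eqxx.
  - by rewrite E (partnerK H2) eqxx.
apply/subsetP => z /set2P [] ->; first exact: orbit_of_refl.
exact: (partner_in_orbit true (orbit_of_refl y)).
Qed.

(* A dart [(x, b)] stands at node [x], about to follow the contact of
   structure [b] (true for [Q1]) at [x]; where there is none it stays put. *)
Definition step (d : 'I_n * bool) : 'I_n * bool := (partner_in d.2 d.1, ~~ d.2).
Definition flip (d : 'I_n * bool) : 'I_n * bool := (d.1, ~~ d.2).
Definition dead_end (d : 'I_n * bool) : bool := partner_in d.2 d.1 == d.1.

Lemma step_inj : injective step.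
Proof.
move=> [x b] [y c] [E1 /negb_inj Ebc]; subst c.
by rewrite -(partner_inK b x) E1 partner_inK.
Qed.

Lemma step_flip_step d : step (flip (step d)) = flip d.
Proof. by case: d => x b; rewrite /step /flip /= negbK partner_inK. Qed.

Lemma dead_endE d : dead_end d = (flip d == step d).
Proof. by case: d => x b; rewrite /dead_end /flip /step xpair_eqE eqxx andbT eq_sym. Qed.

Lemma iter_step_flip j d : iter j step (flip (iter j step d)) = flip d.
Proof. by elim: j => // j IH; rewrite iterSr iterS step_flip_step. Qed.

Lemma iter_step_color j d : (iter j step d).2 = d.2 (+) odd j.
Proof. by elim: j => [|j IH]; rewrite ?addbF // iterS /= IH addbN. Qed.

Lemma fconnect_step_connect d d' : fconnect step d d' -> connect A d.1 d'.1.
Proof.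
move/iter_findex <-; elim: (findex _ _ _) => [|j IH]; first exact: connect0.
rewrite iterS; apply: connect_trans IH _.
by have := partner_in_orbit (iter j step d).2 (orbit_of_refl (iter j step d).1); rewrite inE.
Qed.

Lemma connect_fconnect_step d y : connect A d.1 y -> exists c, fconnect step d (y, c).
Proof.
move=> Hy; suff : y \in [set z | [exists c, fconnect step d (z, c)]].
  by rewrite inE => /existsP.
apply: (subsetP (orbit_of_min (x := d.1) _ _)); rewrite ?inE //.
  by apply/existsP; exists d.2; case: d {Hy} => ? ?; exact: connect0.
move=> a b; rewrite !inE => /existsP [c Hc] /adj_unionP [c' [Eb _]].
apply/existsP; exists (~~ c); apply: connect_trans Hc _.
have [Ecc' | /negPf Ncc'] := eqVneq c c'.
  by subst c'; apply: connect1; apply/eqP; rewrite -Eb.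
have Hc' : c' = ~~ c by case: c c' Ncc' {Eb} => [] [].
rewrite fconnect_sym; last exact: step_inj.
by apply: connect1; apply/eqP; rewrite /step /= -Eb Hc' partner_inK negbK.
Qed.

Section StepOrbit.
Variable d : 'I_n * bool.
Local Notation L := (order step d).

Lemma iter_step_addL k : iter (k + L) step d = iter k step d.
Proof. by rewrite iterD iter_order //; exact: step_inj. Qed.

Lemma iter_step_eq a b : (a <= b)%N -> (b - a < L)%N -> iter a step d = iter b step d -> a = b.
Proof.
move=> Hab HL E; have : iter a step (iter (b - a) step d) = iter a step (iter 0 step d).
  by rewrite -iterD subnKC // -E.
move/(iter_inj step_inj) => /= E'.
by have := findex_iter HL; rewrite E' findex0; lia.
Qed.

(* [flip] reverses the orbit of [step]: if [flip d] is reached from [d] after [k]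
   steps, then [flip] maps the [j]-th dart of the orbit to the [(k - j)]-th. *)
Lemma flip_iter_step k j : flip d = iter k step d -> (j <= L)%N ->
  flip (iter j step d) = iter (k + L - j) step d.
Proof.
move=> Hk Hj; apply: (iter_inj (k := j) step_inj).
by rewrite iter_step_flip -iterD Hk (_ : j + _ = k + order step d)%N ?iter_step_addL //; lia.
Qed.

Lemma order_step_even : ~~ odd L.
Proof.
have := iter_step_color L d; rewrite iter_order; last exact: step_inj.
by case: (d.2); case: (odd L).
Qed.

End StepOrbit.

Lemma dead_end_in_orbit d : fconnect step d (flip d) -> exists j, dead_end (iter j step d).
Proof.
move=> Hd; set k := findex step d (flip d).
have Hk : flip d = iter k step d by rewrite iter_findex.
have HkL : (k < order step d)%N by apply: findex_max.
have Hodd : odd k.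
  by have := iter_step_color k d; rewrite -Hk /flip /=; case: (d.2); case: (odd k).
have Hkh := odd_double_half k; rewrite Hodd -muln2 /= in Hkh.
exists k./2; rewrite dead_endE (flip_iter_step Hk); last by lia.
rewrite -iterS (_ : k + _ - _ = (k./2).+1 + order step d)%N ?iter_step_addL //; lia.
Qed.

(* The orbit of a dead end runs along a path and back: its only dead ends are
   at positions [0] and [L/2]. *)
Lemma card_dead_ends_in_orbit d : dead_end d ->
  #|[set j : 'I_(order step d) | dead_end (iter j step d)]| = 2%N.
Proof.
move=> Hd; set L := order step d.
have Hd1 : flip d = iter 1 step d by apply/eqP; rewrite -dead_endE.
have HL := order_step_even d; have HL0 : (0 < L)%N := order_gt0 _ _.
have Hh := odd_double_half L; rewrite (negbTE HL) -muln2 /= in Hh.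
have deadE j : (j < L)%N -> dead_end (iter j step d) = (j == 0%N) || (2 * j == L).
  move=> Hj; rewrite dead_endE (flip_iter_step Hd1) ?(ltnW Hj) // -iterS.
  apply/eqP/orP => [E | [/eqP -> | /eqP E]].
  - have [-> | Hj0] := eqVneq j 0%N; [by left | right; apply/eqP].
    case: (leqP (1 + L - j) j.+1) => Hle.
      by have := iter_step_eq Hle _ E; lia.
    by have := iter_step_eq (ltnW Hle) _ (esym E); lia.
  - by rewrite subn0 iter_step_addL.
  - by rewrite (_ : 1 + L - j = j.+1)%N //; lia.
have HhL : (L./2 < L)%N by lia.
have -> : [set j : 'I_L | dead_end (iter j step d)] = [set Ordinal HL0; Ordinal HhL].
  apply/setP => j; rewrite !inE deadE ?ltn_ord // -!val_eqE /=.
  by apply/orP/orP => [] [] /eqP E; [left | right | left | right]; apply/eqP => //; lia.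
by rewrite cards2 -val_eqE /=; apply/eqP; lia.
Qed.

Lemma cyclic_orbit_no_end_node x y :
  cyclic_orbit Q1 Q2 (orbit_of Q x) -> y \in orbit_of Q x -> ~~ end_node y.
Proof.
rewrite /cyclic_orbit => /orP [/andP [_ HO] | /andP [Hs /existsP [t /and3P [Hu /eqP Ht Hc]]]] Hy.
  move: HO; rewrite inE => /andP [HO1 HO2].
  by rewrite /end_node (contact_at H1 HO1 Hy).2 (contact_at H2 HO2 Hy).2.
have Hyt : y \in t by rewrite -Ht inE in Hy.
have Hst : (2 < size t)%N by rewrite size_tuple.
have [z [w [Hzw Hyz Hwy]]] := cycle_uniq_neighbours Hu Hc Hst Hyt.
rewrite adj_sym in Hwy.
have [b [Eb Nb]] := adj_unionP _ _ Hyz; have [c [Ec Nc]] := adj_unionP _ _ Hwy.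
have Hc' : c = ~~ b by apply: contraNeq Hzw; case: b c Eb Ec {Nb Nc} => [] [] //= <- <-.
subst c; rewrite eq_sym -Eb in Nb; rewrite eq_sym -Ec in Nc.
by rewrite /end_node; case: b Nb Nc {Eb Ec} => /= -> ->.
Qed.

Lemma small_orbit_no_end_node x y : (#|orbit_of Q x| < 2)%N -> y \in orbit_of Q x -> ~~ end_node y.
Proof.
move=> Hs Hy; suff fix_y b : partner_in b y = y.
  by have := fix_y true; have := fix_y false; rewrite /end_node /= => -> ->; rewrite !eqxx.
apply/eqP/negPn/negP => Hne.
have : [set y; partner_in b y] \subset orbit_of Q x.
  by apply/subsetP => z /set2P [] ->; [exact: Hy | exact: partner_in_orbit].
by move/subset_leq_card; rewrite cards2 eq_sym Hne; lia.
Qed.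

Lemma paired_in_large_orbit x y : (2 <= #|orbit_of Q x|)%N -> y \in orbit_of Q x ->
  (partner Q1 y != y) || (partner Q2 y != y).
Proof.
move=> Hs Hy; apply/negPn/negP; rewrite negb_or !negbK => /andP [/eqP E1 /eqP E2].
by move: Hs; rewrite -(orbit_of_eq Hy) (orbit_of_unpaired E1 E2) cards1.
Qed.

Section DegreeTwoOrbit.
Variable x : 'I_n.
Hypothesis degree_two : forall y, y \in orbit_of Q x ->
  [&& partner Q1 y != y, partner Q2 y != y & partner Q1 y != partner Q2 y].
Local Notation d0 := (x, true).

(* Without dead ends, the step orbit of [(x, true)] passes through each node of
   the orbit exactly once, so its node sequence is a Hamiltonian cycle. *)
Definition tour : seq 'I_n := map fst (orbit step d0).

Lemma no_dead_end d : fconnect step d0 d -> ~~ dead_end d.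
Proof.
case: d => y c /fconnect_step_connect /= Hy.
have Hy' : y \in orbit_of Q x by rewrite inE.
have /and3P [N1 N2 _] := degree_two Hy'.
by rewrite /dead_end; case: c.
Qed.

Lemma uniq_tour : uniq tour.
Proof.
rewrite map_inj_in_uniq ?orbit_uniq // => [[y b]] [y' c] Hb Hc /= Ey; subst y'.
have [-> // | Hbc] := eqVneq b c; exfalso.
have Hflip : flip (y, b) = (y, c) by rewrite /flip; case: b c Hbc {Hb Hc} => [] [].
have Hd0b : fconnect step d0 (y, b) by rewrite fconnect_orbit.
have Hd0c : fconnect step d0 (y, c) by rewrite fconnect_orbit.
have [j Hj] : exists j, dead_end (iter j step (y, b)).
  apply: dead_end_in_orbit; rewrite Hflip; apply: connect_trans Hd0c.
  by rewrite fconnect_sym //; exact: step_inj.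
by have := no_dead_end (connect_trans Hd0b (fconnect_iter _ j _)); rewrite Hj.
Qed.

Lemma tour_nodes : [set y in tour] = orbit_of Q x.
Proof.
apply/setP => y; rewrite inE; apply/mapP/idP => [[d Hd ->] | ].
  by rewrite inE; apply: (fconnect_step_connect (d := d0)); rewrite fconnect_orbit.
by rewrite inE => /(@connect_fconnect_step d0) [c Hc]; exists (y, c); rewrite -?fconnect_orbit.
Qed.

Lemma cycle_tour : cycle A tour.
Proof.
rewrite /tour cycle_map; apply: (@sub_in_cycle _ (mem (orbit step d0)) (frel step)).
- move=> d e Hd _ /= /eqP <-; apply: adj_partner_in.
  by have := @no_dead_end d; rewrite fconnect_orbit Hd /dead_end => /(_ isT).
- exact: allss.
- exact: cycle_orbit step_inj d0.
Qed.

Lemma card_orbit_gt2 : (2 < #|orbit_of Q x|)%N.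
Proof.
have Hx := orbit_of_refl x; have /and3P [N1 N2 N12] := degree_two Hx.
have : [set partner Q1 x; partner Q2 x] \subset orbit_of Q x :\ x.
  apply/subsetP => z /set2P [] ->; rewrite in_setD1 ?N1 ?N2 /=.
  - exact: (partner_in_orbit true Hx).
  - exact: (partner_in_orbit false Hx).
by move/subset_leq_card; rewrite cards2 N12 (cardsD1 x (orbit_of Q x)) Hx.
Qed.

Lemma degree_two_orbit_cyclic : cyclic_orbit Q1 Q2 (orbit_of Q x).
Proof.
have Hsize : size tour == #|orbit_of Q x| by rewrite -tour_nodes cardsE (card_uniqP uniq_tour).
apply/orP; right; rewrite card_orbit_gt2; apply/existsP; exists (Tuple Hsize).
by rewrite /= uniq_tour cycle_tour tour_nodes eqxx.
Qed.

End DegreeTwoOrbit.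

Lemma common_contact_orbit_cyclic y :
  partner Q1 y = partner Q2 y -> partner Q1 y != y -> cyclic_orbit Q1 Q2 (orbit_of Q y).
Proof.
move=> E N; have N' : y != partner Q1 y by rewrite eq_sym.
rewrite (orbit_of_common_contact E N) /cyclic_orbit cards2 N' /=.
by rewrite inE contact_partner //= E contact_partner // -E.
Qed.

Lemma orbit_without_end_node_cyclic x : (2 <= #|orbit_of Q x|)%N ->
  (forall y, y \in orbit_of Q x -> ~~ end_node y) -> cyclic_orbit Q1 Q2 (orbit_of Q x).
Proof.
move=> Hs Hno; have paired y : y \in orbit_of Q x -> (partner Q1 y != y) && (partner Q2 y != y).
  move=> Hy; have := paired_in_large_orbit Hs Hy; have := Hno y Hy.
  by rewrite /end_node; case: (partner Q1 y != y); case: (partner Q2 y != y).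
have [y /andP [Hy /eqP E] | Hdiff] :=
    pickP [pred y in orbit_of Q x | partner Q1 y == partner Q2 y].
  have /andP [N1 _] := paired y Hy.
  by rewrite -(orbit_of_eq Hy); exact: common_contact_orbit_cyclic.
apply: degree_two_orbit_cyclic => y Hy; have /andP [-> ->] := paired y Hy.
by have := Hdiff y; rewrite /= Hy /= => ->.
Qed.

Lemma dead_end_at_paired y c : (partner Q1 y != y) || (partner Q2 y != y) ->
  dead_end (y, c) = end_node y && (c == (partner Q1 y == y)).
Proof.
rewrite /dead_end /end_node /=.
by case: c; case: (partner Q1 y =P y); case: (partner Q2 y =P y).
Qed.

(* The orbit of a dead end is closed under [flip], so it contains every dart
   over its node orbit. *)
Lemma dead_end_orbit_full d y c : dead_end d -> y \in orbit_of Q d.1 -> fconnect step d (y, c).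
Proof.
move=> Hd; rewrite inE => /connect_fconnect_step [c' Hc'].
have [-> // | Ncc'] := eqVneq c c'.
have -> : (y, c) = flip (y, c') by rewrite /flip; case: c c' Ncc' {Hc'} => [] [].
have Hd1 : flip d = iter 1 step d by apply/eqP; rewrite -dead_endE.
rewrite -(iter_findex Hc') (flip_iter_step Hd1); first exact: fconnect_iter.
exact/ltnW/findex_max.
Qed.

Lemma card_fconnect_dead_ends d :
  #|[set e | fconnect step d e && dead_end e]| =
  #|[set j : 'I_(order step d) | dead_end (iter j step d)]|.
Proof.
rewrite -(@card_imset _ _ (fun j : 'I_(order step d) => iter j step d)); last first.
  move=> i j /= E; apply: ord_inj.
  by rewrite -(findex_iter (ltn_ord i)) E findex_iter.
apply: eq_card => e; rewrite !inE; apply/andP/imsetP => [[He Hde] | [j]].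
  by exists (Ordinal (findex_max He)); rewrite ?inE /= iter_findex.
by rewrite inE => Hj ->; split=> //; apply: fconnect_iter.
Qed.

Lemma card_end_nodes_linear_orbit y0 : (2 <= #|orbit_of Q y0|)%N -> end_node y0 ->
  #|[set y in orbit_of Q y0 | end_node y]| = 2%N.
Proof.
move=> Hs He0; pose d := (y0, partner Q1 y0 == y0).
have Hd : dead_end d.
  by rewrite dead_end_at_paired ?He0 ?eqxx // (paired_in_large_orbit Hs (orbit_of_refl y0)).
rewrite -(card_dead_ends_in_orbit Hd) -card_fconnect_dead_ends.
rewrite -(@card_in_imset _ _ (fun y => (y, partner Q1 y == y))); last by move=> a b _ _ [].
apply: eq_card => [[y c]]; rewrite !inE; apply/imsetP/andP => [[z] | [He Hde]].
  rewrite inE => /andP [Hz Hez] [-> ->]; split; first exact: dead_end_orbit_full.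
  by rewrite dead_end_at_paired ?Hez ?eqxx // (paired_in_large_orbit Hs Hz).
have Hy : y \in orbit_of Q y0 by rewrite inE; exact: (fconnect_step_connect He).
move: Hde; rewrite dead_end_at_paired ?(paired_in_large_orbit Hs Hy) // => /andP [Hey /eqP ->].
by exists y; rewrite // inE Hy.
Qed.

Lemma card_end_nodes_orbit x : #|[set y in orbit_of Q x | end_node y]| =
  (2 * ((2 <= #|orbit_of Q x|) && ~~ cyclic_orbit Q1 Q2 (orbit_of Q x)))%N.
Proof.
have no_end_nodes : (forall y, y \in orbit_of Q x -> ~~ end_node y) ->
    #|[set y in orbit_of Q x | end_node y]| = 0%N.
  move=> H; apply/eqP; rewrite cards_eq0; apply/eqP/setP => y; rewrite inE in_set0.
  by apply/negbTE/negP => /andP [Hy He]; have := H y Hy; rewrite He.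
have [Hc | Hnc] := boolP (cyclic_orbit Q1 Q2 (orbit_of Q x)).
  by rewrite andbF no_end_nodes // => y; apply: cyclic_orbit_no_end_node.
have [Hs | Hs] := leqP 2 #|orbit_of Q x|; last first.
  by rewrite no_end_nodes // => y; apply: small_orbit_no_end_node.
have [y0 /andP [Hy0 He0] | Hno] := pickP [pred y in orbit_of Q x | end_node y]; last first.
  case/negP: Hnc; apply: orbit_without_end_node_cyclic => // y Hy.
  by have := Hno y; rewrite /= Hy /= => ->.
rewrite -(orbit_of_eq Hy0) in Hs *.
exact: card_end_nodes_linear_orbit.
Qed.

Lemma card_end_nodes : #|[set x | end_node x]| = (2 * Lambda_ge Q1 Q2 2)%N.
Proof.
rewrite (@card_indexed_partition _ _ _ (orbits Q1 Q2) (fun O => [set y in O | end_node y])).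
- rewrite /Lambda_ge -sum_nat_bool_card big_distrr /=.
  by apply: eq_bigr => O /imsetP [x _ ->]; exact: card_end_nodes_orbit.
- move=> x; rewrite inE => Hx; exists (orbit_of Q x); first exact: imset_f.
  by rewrite inE orbit_of_refl.
- by move=> O _; apply/subsetP => y; rewrite !inE => /andP [_ ->].
- move=> O O' y /imsetP [a _ ->] /imsetP [b _ ->] /setIdP [Ha _] /setIdP [Hb _].
  by rewrite -(orbit_of_eq Ha) -(orbit_of_eq Hb).
Qed.

End UnionGraph.

Lemma Acount_add_Lambda_ge (n : nat) (Q1 Q2 : {set {set 'I_n}}) :
  secondary_structure Q1 -> secondary_structure Q2 ->
  (Acount (Q1 :|: Q2) + Lambda_ge Q1 Q2 2)%N = symdiff_card Q1 Q2.
Proof.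
move=> H1 H2; have := symdiff_card_end_nodes H1 H2.
by rewrite (card_end_nodes H1 H2); lia.
Qed.

Lemma dprime4_secondary (n : nat) (Q1 Q2 : {set {set 'I_n}}) :
  secondary_structure Q1 -> secondary_structure Q2 ->
  (dprime 4 Q1 Q2 + 2 * Acount (Q1 :|: Q2))%N = (n.+1 * symdiff_card Q1 Q2)%N.
Proof.
move=> H1 H2; rewrite dprime_contact_monomials => [||e]; last 2 first.
- exact: contact_card.
- exact: contact_card.
have := subset_leq_card (subsetIl (contact_monomials 4 Q1) (contact_monomials 4 Q2)).
have := subset_leq_card (subsetIr (contact_monomials 4 Q1) (contact_monomials 4 Q2)).
have := subset_leq_card (subsetIl Q1 Q2); have := subset_leq_card (subsetIr Q1 Q2).
rewrite cardsU !card_contact_monomials // card_setI_contact_monomials //.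
rewrite Acount_crossing_pairs // symdiff_cardE mulnBr mulnDr.
lia.
Qed.

Theorem mainTheorem11 (n : nat) (Q1 Q2 : {set {set 'I_n}}) :
  (3 <= n)%N -> secondary_structure Q1 -> secondary_structure Q2 ->
  dm 4 Q1 Q2 = (symdiff_card Q1 Q2)%:R - 2%:R / (n.+1)%:R * (Acount (Q1 :|: Q2))%:R
  /\
  dm 4 Q1 Q2 = (symdiff_card Q1 Q2)%:R - 2%:R / (n.+1)%:R *
                 ((symdiff_card Q1 Q2)%:R - (Lambda_ge Q1 Q2 2)%:R).
Proof.
move=> _ H1 H2; have HAL := Acount_add_Lambda_ge H1 H2.
have Hbin : 'C(n + 4 - 3, n) = n.+1 by rewrite (_ : n + 4 - 3 = n.+1)%N ?binSn //; lia.
have Hdm : dm 4 Q1 Q2 = (symdiff_card Q1 Q2)%:R - 2%:R / (n.+1)%:R * (Acount (Q1 :|: Q2))%:R.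
  have /(congr1 (fun k => k%:R : rat)) := dprime4_secondary H1 H2.
  rewrite /dm Hbin natrD !natrM => /(canRL (addrK _)) ->.
  by field; rewrite nat1r pnatr_eq0.
by split=> //; rewrite Hdm -HAL natrD addrK.
Qed.
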